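(* Let $\mathcal A,\mathcal B>0$, $\alpha,\beta\in(0,1)$, $h,\tau>0$, $N\ge1$, and assume $$\frac{\tau^{\alpha}(-\alpha^2+4\alpha-2)\mathcal A+\tau^{\beta}(-\beta^2+4\beta-2)\mathcal B}{h^2}\le\frac{279}{952}.$$ Fix a real $\theta$, let $s=\sin^2(\theta h/2)$, and let $\widetilde\xi_0\in\mathbb C$ and $\widetilde\xi_1,\dots,\widetilde\xi_N$ be defined by $$\widetilde{\mathcal Q}\,\widetilde\xi_{k+1}=\widetilde{\mathcal P}\,\widetilde\xi_k-4s\Big[1+\tfrac13 s+\tfrac8{45}s^2\Big]\sum_{\ell=2}^{k+1}g_\ell^{(\alpha,\beta)}\widetilde\xi_{k+1-\ell},\qquad k=0,\dots,N-1,$$ where $\widetilde{\mathcal Q}=[1-\frac{4}{35}s^3]+4g_0^{(\alpha,\beta)}s[1+\frac13 s+\frac8{45}s^2]$ and $\widetilde{\mathcal P}=[1-\frac{4}{35}s^3]-4g_1^{(\alpha,\beta)}s[1+\frac13 s+\frac8{45}s^2]$. Then $|\widetilde\xi_{k+1}|\le|\widetilde\xi_0|$ for $k=0,1,\dots,N-1$.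
   Context: $\varpi_\ell^{(\sigma)}=(-1)^\ell\binom{\sigma}{\ell}$, $g_0^{(\sigma)}=\frac{1+\sigma}{2}\varpi_0^{(\sigma)}$, $g_\ell^{(\sigma)}=\frac{1+\sigma}{2}\varpi_\ell^{(\sigma)}+\frac{1-\sigma}{2}\varpi_{\ell-1}^{(\sigma)}$ ($\ell\ge1$); $\mu_\alpha=\tau^\alpha\mathcal A/h^2$, $\mu_\beta=\tau^\beta\mathcal B/h^2$, $g_\ell^{(\alpha,\beta)}=\mu_\alpha g_\ell^{(1-\alpha)}+\mu_\beta g_\ell^{(1-\beta)}$. The sum is empty for $k=0$. *)

From Stdlib Require Import Reals Lra Lia.
From Coquelicot Require Import Coquelicot.
Open Scope R_scope.

Fixpoint binomR (sigma : R) (l : nat) : R :=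
  match l with
  | O => 1
  | S l' => binomR sigma l' * (sigma - INR l') / (INR l' + 1)
  end.

Definition varpi (sigma : R) (l : nat) : R := (-1) ^ l * binomR sigma l.

Definition gcoef (sigma : R) (l : nat) : R :=
  match l with
  | O => (1 + sigma) / 2 * varpi sigma 0
  | S l' => (1 + sigma) / 2 * varpi sigma (S l') + (1 - sigma) / 2 * varpi sigma l'
  end.

Definition gab (A B alpha beta tau h : R) (l : nat) : R :=
  Rpower tau alpha * A / h ^ 2 * gcoef (1 - alpha) l
  + Rpower tau beta * B / h ^ 2 * gcoef (1 - beta) l.

(* sum_{l=m}^{n} f l  in C (zero when n < m) *)
Fixpoint Csum_from (m : nat) (len : nat) (f : nat -> C) : C :=
  match len with
  | O => 0%C
  | S len' => Cplus (f m) (Csum_from (S m) len' f)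
  end.
Definition Csum (m n : nat) (f : nat -> C) : C := Csum_from m (S n - m) f.

(** The weights g_l^(sigma), sigma in [0,1], satisfy g_0 > 0, g_l <= 0 for
    l >= 2, and have nonnegative partial sums: with T_n = sum_{l<=n} varpi_l
    one has varpi_{n+1} = -sigma/(n+1) T_n and T_{n+1} = T_n (n+1-sigma)/(n+1).
    The same then holds for g_l^(alpha,beta).  For a recurrence
    (a + b g_0) xi_{k+1} = (a - b g_1) xi_k - b sum_{l>=2} g_l xi_{k+1-l}
    with b g_1 <= a, the triangle inequality and strong induction give
    (a + b g_0) |xi_{k+1}| <= (a - b (g_1 + sum_{l>=2} g_l)) M <= (a + b g_0) M
    for M = |xi_0|.  The step condition of the theorem gives g_1 <= 279/1904,
    and 4 s F * 279/1904 <= 1 - 4/35 s^3 on [0,1], with equality at s = 1. *)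
From Stdlib Require Import Reals Lra Lia.
From Coquelicot Require Import Coquelicot.
Open Scope R_scope.

Fixpoint Rsum_from (m len : nat) (f : nat -> R) : R :=
  match len with
  | O => 0
  | S len' => f m + Rsum_from (S m) len' f
  end.

Lemma Rsum_from_snoc m len f :
  Rsum_from m (S len) f = Rsum_from m len f + f (m + len)%nat.
Proof.
  revert m; induction len as [|len IH]; intro m.
  - simpl; rewrite Nat.add_0_r; lra.
  - change (Rsum_from m (S (S len)) f) with (f m + Rsum_from (S m) (S len) f).
    rewrite IH; simpl; rewrite Nat.add_succ_r; lra.
Qed.

Lemma Rsum_from_lincomb m len f g c d :
  Rsum_from m len (fun l => c * f l + d * g l)
  = c * Rsum_from m len f + d * Rsum_from m len g.
Proof.
  revert m; induction len as [|len IH]; intro m; simpl; [lra|].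
  rewrite IH; lra.
Qed.

Lemma Cmod_Csum_from_le m len (g : nat -> R) (x : nat -> C) M :
  (forall l, (m <= l < m + len)%nat -> g l <= 0 /\ Cmod (x l) <= M) ->
  Cmod (Csum_from m len (fun l => Cmult (RtoC (g l)) (x l)))
  <= - Rsum_from m len g * M.
Proof.
  revert m; induction len as [|len IH]; intros m Hgx; simpl.
  - rewrite Cmod_0; lra.
  - destruct (Hgx m ltac:(lia)) as [Hg Hx].
    eapply Rle_trans; [apply Cmod_triangle|].
    rewrite Cmod_mult, Cmod_R, Rabs_left1 by exact Hg.
    assert (IHm := IH (S m) ltac:(intros l Hl; apply Hgx; lia)).
    nra.
Qed.

Lemma varpi_0 sigma : varpi sigma 0 = 1.
Proof. unfold varpi; simpl; lra. Qed.

Lemma varpi_S sigma n :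
  varpi sigma (S n) = varpi sigma n * ((INR n - sigma) / (INR n + 1)).
Proof.
  unfold varpi; simpl.
  assert (INR n + 1 <> 0) by (pose proof (pos_INR n); lra).
  field; assumption.
Qed.

Lemma Rsum_varpi_S sigma n :
  Rsum_from 0 (S (S n)) (varpi sigma)
  = Rsum_from 0 (S n) (varpi sigma) * ((INR n + 1 - sigma) / (INR n + 1))
  /\ varpi sigma (S n) = - sigma / (INR n + 1) * Rsum_from 0 (S n) (varpi sigma).
Proof.
  induction n as [|n [_ IH]].
  - simpl; rewrite varpi_S, varpi_0; simpl; split; field.
  - pose proof (pos_INR n).
    assert (Hsum : Rsum_from 0 (S (S n)) (varpi sigma)
                   = Rsum_from 0 (S n) (varpi sigma) * ((INR n + 1 - sigma) / (INR n + 1))).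
    { rewrite Rsum_from_snoc; simpl (0 + S n)%nat; rewrite IH; field; lra. }
    split.
    + rewrite Rsum_from_snoc, Hsum; simpl (0 + S (S n))%nat.
      rewrite varpi_S, IH, S_INR; field; lra.
    + rewrite varpi_S, IH, Hsum, S_INR; field; lra.
Qed.

Section Weights.

Variable sigma : R.
Hypothesis hsigma : 0 <= sigma <= 1.

Lemma Rsum_varpi_nonneg n : 0 <= Rsum_from 0 (S n) (varpi sigma).
Proof.
  induction n as [|n IH]; [simpl; rewrite varpi_0; lra|].
  rewrite (proj1 (Rsum_varpi_S sigma n)).
  pose proof (pos_INR n).
  apply Rmult_le_pos; [exact IH|apply Rdiv_le_0_compat; lra].
Qed.

Lemma varpi_S_nonpos n : varpi sigma (S n) <= 0.
Proof.
  rewrite (proj2 (Rsum_varpi_S sigma n)).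
  pose proof (Rsum_varpi_nonneg n); pose proof (pos_INR n).
  assert (0 <= sigma / (INR n + 1)) by (apply Rdiv_le_0_compat; lra).
  unfold Rdiv in *; nra.
Qed.

Lemma gcoef_0_pos : 0 < gcoef sigma 0.
Proof. simpl; rewrite varpi_0; lra. Qed.

Lemma gcoef_SS_nonpos n : gcoef sigma (S (S n)) <= 0.
Proof.
  simpl gcoef.
  pose proof (varpi_S_nonpos (S n)); pose proof (varpi_S_nonpos n); nra.
Qed.

Lemma Rsum_gcoef n :
  Rsum_from 0 (S (S n)) (gcoef sigma)
  = (1 + sigma) / 2 * Rsum_from 0 (S (S n)) (varpi sigma)
    + (1 - sigma) / 2 * Rsum_from 0 (S n) (varpi sigma).
Proof.
  induction n as [|n IH]; [simpl; lra|].
  rewrite (Rsum_from_snoc 0 (S (S n)) (gcoef sigma)), IH,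
    (Rsum_from_snoc 0 (S (S n)) (varpi sigma)), (Rsum_from_snoc 0 (S n) (varpi sigma)).
  simpl (0 + _)%nat; simpl gcoef; lra.
Qed.

Lemma Rsum_gcoef_nonneg n : 0 <= Rsum_from 0 (S (S n)) (gcoef sigma).
Proof.
  rewrite Rsum_gcoef.
  pose proof (Rsum_varpi_nonneg n); pose proof (Rsum_varpi_nonneg (S n)); nra.
Qed.

End Weights.

Lemma gcoef_1_compl alpha : gcoef (1 - alpha) 1 = (- alpha ^ 2 + 4 * alpha - 2) / 2.
Proof. simpl gcoef; rewrite varpi_S, varpi_0; simpl; field. Qed.

Section MixedWeights.

Variables A B alpha beta tau h : R.
Hypotheses (hA : 0 < A) (hB : 0 < B) (hh : 0 < h).
Hypotheses (halpha : 0 < alpha < 1) (hbeta : 0 < beta < 1).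

Let mu_a := Rpower tau alpha * A / h ^ 2.
Let mu_b := Rpower tau beta * B / h ^ 2.

Lemma Rpower_scaled_pos x c : 0 < c -> 0 < Rpower tau x * c / h ^ 2.
Proof.
  intro hc; apply Rdiv_lt_0_compat; [apply Rmult_lt_0_compat; [apply exp_pos|exact hc]|].
  apply pow_lt, hh.
Qed.

Lemma gab_eq l : gab A B alpha beta tau h l
  = mu_a * gcoef (1 - alpha) l + mu_b * gcoef (1 - beta) l.
Proof. reflexivity. Qed.

Lemma gab_0_pos : 0 < gab A B alpha beta tau h 0.
Proof.
  rewrite gab_eq.
  pose proof (Rpower_scaled_pos alpha A hA); pose proof (Rpower_scaled_pos beta B hB).
  pose proof (gcoef_0_pos (1 - alpha) ltac:(lra)); pose proof (gcoef_0_pos (1 - beta) ltac:(lra)).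
  unfold mu_a, mu_b; nra.
Qed.

Lemma gab_1 : gab A B alpha beta tau h 1
  = (Rpower tau alpha * (- alpha ^ 2 + 4 * alpha - 2) * A
     + Rpower tau beta * (- beta ^ 2 + 4 * beta - 2) * B) / h ^ 2 / 2.
Proof.
  rewrite gab_eq, !gcoef_1_compl; unfold mu_a, mu_b; field; lra.
Qed.

Lemma gab_SS_nonpos n : gab A B alpha beta tau h (S (S n)) <= 0.
Proof.
  rewrite gab_eq.
  pose proof (Rpower_scaled_pos alpha A hA); pose proof (Rpower_scaled_pos beta B hB).
  pose proof (gcoef_SS_nonpos (1 - alpha) ltac:(lra) n).
  pose proof (gcoef_SS_nonpos (1 - beta) ltac:(lra) n).
  unfold mu_a, mu_b; nra.
Qed.

Lemma Rsum_gab_nonneg n : 0 <= Rsum_from 0 (S (S n)) (gab A B alpha beta tau h).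
Proof.
  unfold gab; rewrite Rsum_from_lincomb.
  pose proof (Rpower_scaled_pos alpha A hA); pose proof (Rpower_scaled_pos beta B hB).
  pose proof (Rsum_gcoef_nonneg (1 - alpha) ltac:(lra) n).
  pose proof (Rsum_gcoef_nonneg (1 - beta) ltac:(lra) n).
  nra.
Qed.

End MixedWeights.

Section Stability.

Variables (a b : R) (g : nat -> R) (xi : nat -> C) (N : nat).
Hypotheses (ha : 0 < a) (hb : 0 <= b) (hg0 : 0 <= g 0%nat) (hg1 : b * g 1%nat <= a).
Hypothesis hgSS : forall n, g (S (S n)) <= 0.
Hypothesis hgsum : forall n, 0 <= Rsum_from 0 (S (S n)) g.
Hypothesis hrec : forall k, (k < N)%nat ->
  Cmult (RtoC (a + b * g 0%nat)) (xi (S k)) =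
  Cminus (Cmult (RtoC (a - b * g 1%nat)) (xi k))
    (Cmult (RtoC b) (Csum 2 (S k) (fun l => Cmult (RtoC (g l)) (xi (S k - l)%nat)))).

Lemma recurrence_step (M : R) k : (k < N)%nat ->
  (forall j, (j <= k)%nat -> Cmod (xi j) <= M) -> Cmod (xi (S k)) <= M.
Proof.
  intros hk hxi.
  set (S2 := Rsum_from 2 k g).
  assert (hM : 0 <= M) by (eapply Rle_trans; [apply Cmod_ge_0|apply (hxi 0%nat); lia]).
  assert (hconv : Cmod (Csum 2 (S k) (fun l => Cmult (RtoC (g l)) (xi (S k - l)%nat)))
                  <= - S2 * M).
  { unfold Csum; replace (S (S k) - 2)%nat with k by lia.
    apply Cmod_Csum_from_le; intros l hl; destruct l as [|[|l]]; try lia.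
    split; [apply hgSS|apply hxi; lia]. }
  assert (hsum : 0 <= g 0%nat + g 1%nat + S2) by (pose proof (hgsum k); simpl in *; unfold S2; lra).
  assert (hQ : (a + b * g 0%nat) * Cmod (xi (S k))
               <= (a - b * g 1%nat) * M + b * (- S2 * M)).
  { rewrite <- (Rabs_right (a + b * g 0%nat)) by nra.
    rewrite <- Cmod_R, <- Cmod_mult, hrec by exact hk.
    unfold Cminus; eapply Rle_trans; [apply Cmod_triangle|].
    rewrite Cmod_opp, !Cmod_mult, !Cmod_R, Rabs_right, (Rabs_right b) by lra.
    apply Rplus_le_compat; apply Rmult_le_compat_l; [lra|apply hxi; lia|lra|exact hconv]. }
  assert (0 <= b * (g 0%nat + g 1%nat + S2) * M) by (apply Rmult_le_pos; [apply Rmult_le_pos|]; lra).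
  apply (Rmult_le_reg_l (a + b * g 0%nat)); nra.
Qed.

Lemma recurrence_stable k : (k < N)%nat -> Cmod (xi (S k)) <= Cmod (xi 0%nat).
Proof.
  assert (hall : forall n, (n <= N)%nat -> forall j, (j <= n)%nat -> Cmod (xi j) <= Cmod (xi 0%nat)).
  { induction n as [|n IH]; intros hn j hj.
    - replace j with 0%nat by lia; lra.
    - destruct (Nat.eq_dec j (S n)) as [->|hne]; [|apply IH; lia].
      apply recurrence_step; [lia|]; intros i hi; apply IH; lia. }
  intro hk; apply (hall (S k)); lia.
Qed.

End Stability.

Lemma sin_sq_bounds x : 0 <= sin x ^ 2 <= 1.
Proof. pose proof (SIN_bound x); simpl; nra. Qed.

Lemma symbol_bound s : 0 <= s <= 1 ->
  4 * s * (1 + s / 3 + 8 / 45 * s ^ 2) * (279 / 1904) <= 1 - 4 / 35 * s ^ 3.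
Proof.
  intro hs.
  assert (0 <= (1 - s) * (1 + 197 / 476 * s + 26 / 119 * s * s)) by (apply Rmult_le_pos; nra).
  simpl; nra.
Qed.

Theorem lemma10 (A B alpha beta h tau : R) (N : nat)
  (hA : 0 < A) (hB : 0 < B)
  (halpha : 0 < alpha < 1) (hbeta : 0 < beta < 1)
  (hh : 0 < h) (htau : 0 < tau) (hN : (1 <= N)%nat)
  (hcond : (Rpower tau alpha * (- alpha ^ 2 + 4 * alpha - 2) * A
            + Rpower tau beta * (- beta ^ 2 + 4 * beta - 2) * B) / h ^ 2
           <= 279 / 952)
  (theta : R) (xi : nat -> C) :
  let s := (sin (theta * h / 2)) ^ 2 in
  let F := 1 + s / 3 + 8 / 45 * s ^ 2 in
  let Q := (1 - 4 / 35 * s ^ 3) + 4 * gab A B alpha beta tau h 0 * s * F in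
  let P := (1 - 4 / 35 * s ^ 3) - 4 * gab A B alpha beta tau h 1 * s * F in
  (forall k : nat, (k < N)%nat ->
     Cmult (RtoC Q) (xi (S k)) =
     Cminus (Cmult (RtoC P) (xi k))
       (Cmult (RtoC (4 * s * F))
          (Csum 2 (S k) (fun l => Cmult (RtoC (gab A B alpha beta tau h l)) (xi (S k - l)%nat))))) ->
  forall k : nat, (k < N)%nat -> Cmod (xi (S k)) <= Cmod (xi 0%nat).
Proof.
  intros s F Q P hrec.
  pose proof (sin_sq_bounds (theta * h / 2)) as hs; fold s in hs.
  assert (hb : 0 <= 4 * s * F) by (unfold F; simpl; nra).
  assert (hg1 : gab A B alpha beta tau h 1 <= 279 / 1904)
    by (rewrite gab_1 by lra; lra).
  apply (recurrence_stable (1 - 4 / 35 * s ^ 3) (4 * s * F) (gab A B alpha beta tau h) xi N).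
  - simpl; nra.
  - exact hb.
  - apply Rlt_le, gab_0_pos; assumption.
  - eapply Rle_trans; [apply Rmult_le_compat_l; [exact hb|exact hg1]|].
    apply symbol_bound, hs.
  - apply gab_SS_nonpos; assumption.
  - apply Rsum_gab_nonneg; assumption.
  - intros k hk.
    replace (1 - 4 / 35 * s ^ 3 + 4 * s * F * gab A B alpha beta tau h 0) with Q by (unfold Q; ring).
    replace (1 - 4 / 35 * s ^ 3 - 4 * s * F * gab A B alpha beta tau h 1) with P by (unfold P; ring).
    exact (hrec k hk).
Qed.
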